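(* Let $n\ge 2$, $\alpha\in(0,1)$ and $\rho\in\{\mathrm{VaR},\mathrm{ES}\}$, and let $\mathbf X=(X_1,\dots,X_n)$ be in $(L^0)^n$ when $\rho=\mathrm{VaR}$ and in $(L^1)^n$ when $\rho=\mathrm{ES}$. If $\mathbf X$ is $\alpha$-concentrated, then $\mathrm{DQ}^\rho_\alpha(\mathbf X)\le 1$. If, in addition, with $S=\sum_{i=1}^nX_i$, the map $\beta\mapsto\rho_\beta(S)$ is continuous at $\beta=\alpha$ and $\rho_\beta(S)>\rho_\alpha(S)$ for all $\beta\in(0,\alpha)$, then $\mathrm{DQ}^\rho_\alpha(\mathbf X)=1$.
   Context: Let $(\Omega,\mathcal F,\mathbb P)$ be an atomless probability space. $L^0$ is the set of all random variables and $L^1$ the set of integrable random variables; a.s. equal random variables are identified. For $\alpha\in[0,1)$ and $X\in L^0$, $\mathrm{VaR}_\alpha(X)=\inf\{x\in\mathbb R:\mathbb P(X\le x)\ge 1-\alpha\}$; in particular $\mathrm{VaR}_0(X)=\operatorname{ess\,sup}X$, possibly $+\infty$. For $\alpha\in(0,1)$ and $X\in L^1$, $\mathrm{ES}_\alpha(X)=\frac1\alpha\int_0^\alpha\mathrm{VaR}_\beta(X)\,\mathrm d\beta$, and $\mathrm{ES}_0(X)=\operatorname{ess\,sup}X$. For $\rho\in\{\mathrm{VaR},\mathrm{ES}\}$, $\alpha\in(0,1)$ and $\mathbf X=(X_1,\dots,X_n)$ (in $(L^0)^n$ when $\rho=\mathrm{VaR}$, in $(L^1)^n$ when $\rho=\mathrm{ES}$),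 the diversification quotient is $\mathrm{DQ}^\rho_\alpha(\mathbf X)=\alpha^*/\alpha$, where $\alpha^*=\inf\{\beta\in(0,1):\rho_\beta(\sum_{i=1}^nX_i)\le\sum_{i=1}^n\rho_\alpha(X_i)\}$, with the convention $\inf\emptyset=1$. A tail event of a random variable $X$ is an event $A\in\mathcal F$ with $0<\mathbb P(A)<1$ such that $X(\omega)\ge X(\omega')$ for a.s. all $\omega\in A$ and $\omega'\in A^c$. For $\alpha\in(0,1)$, a random vector $(X_1,\dots,X_n)$ is $\alpha$-concentrated if there is an event $A$ with $\mathbb P(A)=\alpha$ that is a tail event of every $X_i$, $i=1,\dots,n$. *)

From HB Require Import structures.
From mathcomp Require Import all_boot all_order all_algebra.
From mathcomp Require Import all_classical all_reals all_analysis.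
Set Implicit Arguments. Unset Strict Implicit. Unset Printing Implicit Defensive.
Import Order.TTheory GRing.Theory Num.Theory.
Import numFieldNormedType.Exports.
Local Open Scope classical_set_scope.
Local Open Scope ring_scope.

Section Risk.
Context {d : measure_display} {T : measurableType d} {R : realType}.
Variable P : probability T R.

Definition atomless : Prop :=
  forall A : set T, measurable A -> (0 < P A)%E ->
    exists B : set T, [/\ measurable B, B `<=` A & (0 < P B < P A)%E].

(* VaR_b(X) = inf {x in R | P(X <= x) >= 1 - b}, extended-real valued
   (VaR_0 = ess sup X, possibly +oo) *)
Definition VaR (b : R) (X : T -> R) : \bar R :=
  ereal_inf [set x%:E | x in [set x : R | ((1 - b)%:E <= P [set w | (X w <= x)%R])%E]].

Definition ES (b : R) (X : T -> R) : \bar R :=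
  if b == 0 then VaR 0 X
  else ((b^-1)%:E * \int[lebesgue_measure]_(c in `]0%R, b[%classic) VaR c X)%E.

Inductive risk_measure := rm_VaR | rm_ES.

Definition rho (r : risk_measure) : R -> (T -> R) -> \bar R :=
  match r with rm_VaR => VaR | rm_ES => ES end.

Definition admissible (r : risk_measure) (n : nat) (X : 'I_n -> T -> R) : Prop :=
  match r with
  | rm_VaR => forall i, measurable_fun setT (X i)
  | rm_ES => forall i, measurable_fun setT (X i) /\ P.-integrable setT (EFin \o X i)
  end.

Definition sumRV (n : nat) (X : 'I_n -> T -> R) : T -> R :=
  fun w => \sum_(i < n) X i w.

Definition alpha_star (r : risk_measure) (a : R) (n : nat) (X : 'I_n -> T -> R) : R :=
  let E := [set b : R | 0 < b < 1 /\
              (rho r b (sumRV X) <= \sum_(i < n) rho r a (X i))%E] in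
  if pselect (exists b, E b) then inf E else 1.

Definition DQ (r : risk_measure) (a : R) (n : nat) (X : 'I_n -> T -> R) : R :=
  alpha_star r a X / a.

(* tail event: 0 < P(A) < 1 and X(w) >= X(w') for a.s. all w in A, w' in A^c,
   i.e. outside a P-null set *)
Definition tail_event (X : T -> R) (A : set T) : Prop :=
  [/\ measurable A, (0 < P A)%E, (P A < 1)%E &
    exists N : set T, [/\ measurable N, P N = 0%E &
      forall w w', A w -> ~ N w -> ~ A w' -> ~ N w' -> (X w' <= X w)%R]].

Definition concentrated (a : R) (n : nat) (X : 'I_n -> T -> R) : Prop :=
  exists A : set T, P A = a%:E /\ forall i, tail_event (X i) A.

End Risk.

From HB Require Import structures.
From mathcomp Require Import all_boot all_order all_algebra.
From mathcomp Require Import all_classical all_reals all_analysis.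
From mathcomp Require Import measurable_realfun lra.
Import Order.TTheory GRing.Theory Num.Theory.
Import numFieldNormedType.Exports.
Local Open Scope classical_set_scope.
Local Open Scope ring_scope.

(* Let A be the common tail event, with P(A) = a. Off a null set, each X_i is
   at least VaR_a(X_i) on A and at most VaR_a(X_i) off A, hence so is the sum S
   with the level sum_i VaR_a(X_i): thus VaR_a(S) <= sum_i VaR_a(X_i), while
   VaR_b(S) >= sum_i VaR_a(X_i) for every b < a, which gives equality under
   left continuity at a. For ES, the quantile function of Y on (0, a) and the
   restriction of Y to A have the same law whenever A is a tail event of Y of
   probability a, so a ES_a(Y) = E[Y; A], which is additive in Y. In both cases
   a lies in the set defining alpha*, so DQ <= 1, and if rho_b(S) > rho_a(S) for
   all b < a, no smaller level lies in it. *)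

Section value_at_risk.
Context {d : measure_display} {T : measurableType d} {R : realType}.
Variable P : probability T R.
Local Open Scope ereal_scope.

Lemma VaR_le (Y : T -> R) c x :
  (1 - c)%:E <= P [set w | (Y w <= x)%R] -> VaR P c Y <= x%:E.
Proof. by move=> h; apply: ereal_inf_lbound; exists x. Qed.

Lemma VaR_ge (Y : T -> R) c z :
  (forall x, (1 - c)%:E <= P [set w | (Y w <= x)%R] -> z <= x%:E) ->
  z <= VaR P c Y.
Proof. by move=> h; apply: le_ereal_inf_tmp => _ [x hx <-]; exact: h. Qed.

Context {Y : T -> R} (mY : measurable_fun setT Y).

Lemma measurable_sublevel x : measurable [set w | (Y w <= x)%R].
Proof.
rewrite -[X in measurable X]setTI.
have -> : [set w | (Y w <= x)%R] = Y @^-1` `]-oo, x].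
  by apply/seteqP; split => w /=; rewrite in_itv.
exact: mY.
Qed.

Lemma measurable_superlevel x : measurable [set w | (x < Y w)%R].
Proof.
rewrite -[X in measurable X]setTI.
have -> : [set w | (x < Y w)%R] = Y @^-1` `]x, +oo[.
  by apply/seteqP; split => w /=; rewrite in_itv /= andbT.
exact: mY.
Qed.

Lemma superlevelC x : [set w | (x < Y w)%R] = ~` [set w | (Y w <= x)%R].
Proof. by apply/seteqP; split => w /=; rewrite ltNge => /negP. Qed.

Lemma le_sublevel {x y : R} :
  (x <= y)%R -> P [set w | (Y w <= x)%R] <= P [set w | (Y w <= y)%R].
Proof.
move=> xy; apply: le_measure; rewrite ?inE; try exact: measurable_sublevel.
by move=> w /= /le_trans; apply.
Qed.

Let Y_RV : {RV P >-> R} := mfun_Sub (mem_set mY).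

Let cdfE t : cdf Y_RV t = P [set w | (Y w <= t)%R].
Proof. by congr (P _); apply/seteqP; split => w /=; rewrite in_itv. Qed.

Lemma sublevel_lt_right t (c : R) : P [set w | (Y w <= t)%R] < c%:E ->
  exists2 e, (0 < e)%R & P [set w | (Y w <= t + e)%R] < c%:E.
Proof.
rewrite -cdfE => tc.
have [e /= e0 He] := @cdf_right_continuous _ _ _ P Y_RV t _
  (open_nbhs_nbhs (conj (@open_ereal_lt_ereal _ c%:E) tc)).
exists (e / 2)%R; first by rewrite divr_gt0.
rewrite -cdfE; apply: He => /=; last lra.
have -> : (t - (t + e / 2) = - (e / 2))%R by lra.
by rewrite normrN gtr0_norm ?divr_gt0 //; lra.
Qed.

Lemma VaR_fin_num c : (0 < c < 1)%R -> VaR P c Y \is a fin_num.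
Proof.
case/andP => c0 c1.
have lt1 : (1 - c)%:E < 1 by rewrite lte_fin; lra.
have gt0 : 0 < (1 - c)%:E by rewrite lte_fin; lra.
have [M [_ HM]] := @cvg_cdfy1 _ _ _ P Y_RV _
  (open_nbhs_nbhs (conj (@open_ereal_gt_ereal _ (1 - c)%:E) lt1)).
have [M' [_ HM']] := @cvg_cdfNy0 _ _ _ P Y_RV _
  (open_nbhs_nbhs (conj (@open_ereal_lt_ereal _ (1 - c)%:E) gt0)).
rewrite fin_numElt; apply/andP; split.
  apply: (@lt_le_trans _ _ (M' - 1)%:E); first exact: ltNyr.
  apply: VaR_ge => x hx; rewrite lee_fin leNgt; apply/negP => xM.
  have /= := HM' x (lt_trans xM _); rewrite cdfE ltrBlDr ltrDl => /(_ ltr01).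
  by rewrite ltNge hx.
apply: (@le_lt_trans _ _ (M + 1)%:E); last exact: ltry.
by apply: VaR_le; have /= := HM (M + 1)%R; rewrite cdfE ltrDl => /(_ ltr01)/ltW.
Qed.

Lemma lt_VaR t c : (0 < c < 1)%R ->
  (t%:E < VaR P c Y) <-> P [set w | (Y w <= t)%R] < (1 - c)%:E.
Proof.
move=> c01; split.
  by move=> tq; rewrite ltNge; apply/negP => /VaR_le; rewrite leNgt tq.
move=> /sublevel_lt_right [e e0 he].
apply: (@lt_le_trans _ _ (t + e)%:E); first by rewrite lte_fin ltrDl.
apply: VaR_ge => x hx; rewrite lee_fin leNgt; apply/negP => xe.
by have := le_lt_trans (le_trans hx (le_sublevel (ltW xe))) he; rewrite ltxx.
Qed.

Lemma VaR_sublevel c : (0 < c < 1)%R ->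
  (1 - c)%:E <= P [set w | (Y w <= fine (VaR P c Y))%R].
Proof.
move=> c01; rewrite leNgt; apply/negP => /(lt_VaR _ _ c01).
by rewrite fineK ?ltxx // VaR_fin_num.
Qed.

End value_at_risk.

Section tail_event.
Context {d : measure_display} {T : measurableType d} {R : realType}.
Variable P : probability T R.
Local Open Scope ereal_scope.

Definition pr (S : set T) : R := fine (P S).

Lemma prE {S : set T} : measurable S -> P S = (pr S)%:E.
Proof. by move=> mS; rewrite /pr fineK // fin_num_measure. Qed.

Lemma pr_ge0 S : (0 <= pr S)%R.
Proof. by rewrite /pr fine_ge0. Qed.

Lemma le_pr {S S' : set T} : measurable S -> measurable S' -> S `<=` S' -> (pr S <= pr S')%R.
Proof. by move=> mS mS' SS'; rewrite -lee_fin -!prE // le_measure // inE. Qed.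

Lemma prU {S S' : set T} : measurable S -> measurable S' -> S `&` S' = set0 ->
  pr (S `|` S') = (pr S + pr S')%R.
Proof.
move=> mS mS' SS'; apply: EFin_inj.
by rewrite EFinD -!prE ?measureU //; exact: measurableU.
Qed.

Lemma prC {S : set T} : measurable S -> pr (~` S) = (1 - pr S)%R.
Proof.
move=> mS; apply: EFin_inj.
by rewrite EFinB -!prE ?probability_setC //; exact: measurableC.
Qed.

Lemma measure_setD_null {S M : set T} : measurable S -> measurable M -> P M = 0 ->
  P (S `\` M) = P S.
Proof.
move=> mS mM PM; rewrite [RHS](measureDI P mS mM).
by rewrite (@subset_measure0 _ _ _ P (S `&` M) M) ?adde0 //; exact: measurableI.
Qed.

Definition tail_off (N : set T) (Y : T -> R) (A : set T) : Prop :=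
  forall w w', A w -> ~ N w -> ~ A w' -> ~ N w' -> (Y w' <= Y w)%R.

Lemma tail_offS N N' Y A : N `<=` N' -> tail_off N Y A -> tail_off N' Y A.
Proof. by move=> NN' tl w w' Aw Nw Aw' Nw'; apply: tl => // /NN'. Qed.

Lemma tail_off_sum {n : nat} {N : set T} {X : 'I_n -> T -> R} {A : set T} :
  (forall i, tail_off N (X i) A) -> tail_off N (sumRV X) A.
Proof. by move=> tl w w' Aw Nw Aw' Nw'; apply: ler_sum => i _; exact: tl. Qed.

Context {Y : T -> R} {A N : set T} {a : R}.
Hypotheses (mY : measurable_fun setT Y) (mA : measurable A) (PA : P A = a%:E)
  (mN : measurable N) (PN : P N = 0).

Lemma pr_tail : pr (A `\` N) = a.
Proof. by rewrite /pr measure_setD_null // PA. Qed.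

Lemma sublevel_ge_off {x : R} {M : set T} : measurable M -> P M = 0 ->
  (forall w, ~ A w -> ~ M w -> (Y w <= x)%R) -> (1 - a)%:E <= P [set w | (Y w <= x)%R].
Proof.
move=> mM PM YM; have mAc : measurable (~` A) by exact: measurableC.
rewrite EFinB -PA -probability_setC // -(measure_setD_null mAc mM PM).
apply: le_measure; rewrite ?inE; last by move=> w [] /YM /[apply].
- exact: measurableD.
- exact: measurable_sublevel.
Qed.

Lemma le_VaR_off (z : \bar R) b : (0 < b < a)%R ->
  (forall w, A w -> ~ N w -> z <= (Y w)%:E) -> z <= VaR P b Y.
Proof.
case/andP => b0 ba zY; apply: VaR_ge => x hx; rewrite leNgt; apply/negP => xz.
have sub : [set w | (Y w <= x)%R] `<=` ~` A `|` N.
  move=> w /= Ywx; have [Aw|] := pselect (A w); last by left.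
  have [Nw|Nw] := pselect (N w); first by right.
  by have := lt_le_trans xz (zY w Aw Nw); rewrite lte_fin ltNge Ywx.
have mAc : measurable (~` A) by exact: measurableC.
have : P [set w | (Y w <= x)%R] <= P (~` A `|` N).
  by apply: le_measure; rewrite ?inE //; [exact: measurable_sublevel|exact: measurableU].
have -> : P (~` A `|` N) = P (~` A) by rewrite measureU0.
rewrite probability_setC // PA => /(le_trans hx).
by rewrite lee_fin; lra.
Qed.

Hypothesis tlY : tail_off N Y A.

Lemma tail_superlevel_null x : (1 - a)%:E <= P [set w | (Y w <= x)%R] ->
  P (~` A `&` [set w | (x < Y w)%R]) = 0.
Proof.
rewrite (prE (measurable_sublevel mY x)) lee_fin => hx.
have mB : measurable (~` A `&` [set w | (x < Y w)%R]).
  by apply: measurableI; [exact: measurableC|exact: measurable_superlevel].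
apply/eqP; rewrite eq_le measure_ge0 andbT leNgt; apply/negP => Bpos.
have [w' [[Aw' xw'] Nw']] : exists w', (~` A `&` [set w | (x < Y w)%R]) w' /\ ~ N w'.
  apply/not_existsP => noB; move: Bpos; apply/negP; rewrite -leNgt -PN.
  by apply: le_measure; rewrite ?inE // => w Bw; have /not_andP[|/contrapT] := noB w.
(* One point of [~` A] above [x] off [N] lifts all of [A `\` N] above [x]. *)
have sub : (A `\` N) `|` (~` A `&` [set w | (x < Y w)%R]) `<=` [set w | (x < Y w)%R].
  by move=> w [[Aw Nw]|[]//]; exact: lt_le_trans xw' (tlY _ _ Aw Nw Aw' Nw').
have := le_pr (measurableU _ _ (measurableD mA mN) mB) (measurable_superlevel mY x) sub.
rewrite prU ?pr_tail; first last.
- by apply/seteqP; split => w //= [][] Aw _ [].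
- exact: mB.
- exact: measurableD.
have -> : pr [set w | (x < Y w)%R] = (1 - pr [set w | (Y w <= x)%R])%R.
  by rewrite superlevelC prC //; exact: measurable_sublevel.
by move: Bpos; rewrite (prE mB) lte_fin; lra.
Qed.

Lemma VaR_le_tail w : A w -> ~ N w -> VaR P a Y <= (Y w)%:E.
Proof.
move=> Aw Nw; apply/VaR_le/(sublevel_ge_off mN PN) => w' Aw' Nw'.
exact: tlY.
Qed.

Lemma tail_superlevel r :
  P (A `&` [set w | (r < Y w)%R]) = (Num.min a (pr [set w | (r < Y w)%R]))%:E.
Proof.
have mI : measurable (A `&` [set w | (r < Y w)%R]).
  by apply: measurableI => //; exact: measurable_superlevel.
have sublevelE : pr [set w | (Y w <= r)%R] = (1 - pr [set w | (r < Y w)%R])%R.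
  by rewrite superlevelC prC; [lra|exact: measurable_sublevel].
rewrite (prE mI); congr EFin.
have [pa|ap] := leP (pr [set w | (r < Y w)%R]) a.
  have hr : (1 - a)%:E <= P [set w | (Y w <= r)%R].
    by rewrite (prE (measurable_sublevel mY r)) lee_fin sublevelE; lra.
  have -> : A `&` [set w | (r < Y w)%R] =
      [set w | (r < Y w)%R] `\` (~` A `&` [set w | (r < Y w)%R]).
    apply/seteqP; split => w /=; first by move=> [Aw rw]; split => // -[].
    by move=> [rw] /not_andP [/contrapT Aw|//].
  rewrite /pr measure_setD_null ?tail_superlevel_null //.
  - exact: measurable_superlevel.
  - by apply: measurableI; [exact: measurableC|exact: measurable_superlevel].
have sub : A `\` N `<=` A `&` [set w | (r < Y w)%R].
  move=> w [Aw Nw]; split => //; rewrite /= ltNge; apply/negP => Ywr.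
  have := sublevel_ge_off (x:=r) mN PN
    (fun w' Aw' Nw' => le_trans (tlY _ _ Aw Nw Aw' Nw') Ywr).
  by rewrite (prE (measurable_sublevel mY r)) lee_fin sublevelE; lra.
apply/eqP; rewrite eq_le; apply/andP; split.
  have prA : pr A = a by rewrite /pr PA.
  by rewrite -[X in (_ <= X)%R]prA; apply: le_pr => //; exact: subIsetl.
by rewrite -[X in (X <= _)%R]pr_tail; apply: le_pr => //; exact: measurableD.
Qed.

End tail_event.

Lemma null_bigsetU {d} {T : measurableType d} {R : realType}
    (mu : {measure set T -> \bar R}) (I : Type) (s : seq I) (F : I -> set T) :
  (forall i, measurable (F i) /\ mu (F i) = 0%E) ->
  measurable (\big[setU/set0]_(i <- s) F i) /\ mu (\big[setU/set0]_(i <- s) F i) = 0%E.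
Proof.
move=> F0; apply: (big_ind (fun S => measurable S /\ mu S = 0%E)).
- by split; [exact: measurable0|exact: measure0].
- by move=> S S' [mS S0] [mS' S'0]; split; [exact: measurableU|exact: null_set_setU].
- by move=> i _; exact: F0.
Qed.

Lemma measurable_sumRV {d} {T : measurableType d} {R : realType} {n : nat}
    {X : 'I_n -> T -> R} :
  (forall i, measurable_fun setT (X i)) -> measurable_fun setT (sumRV X).
Proof. by move=> mX; exact: measurable_sum. Qed.

Section sum_of_tails.
Context {d : measure_display} {T : measurableType d} {R : realType}.
Variable P : probability T R.
Local Open Scope ereal_scope.

Lemma concentrated_tail_off {n : nat} {X : 'I_n -> T -> R} {a : R} : (0 < n)%N ->
  concentrated P a X -> exists A N, [/\ measurable A, P A = a%:E, measurable N,
    P N = 0 & forall i, tail_off N (X i) A].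
Proof.
move=> n0 [A [PA tlX]]; have mA : measurable A by case: (tlX (Ordinal n0)).
have /choice [Nf NfP] : forall i, exists N : set T,
    [/\ measurable N, P N = 0 & tail_off N (X i) A].
  by move=> i; case: (tlX i) => _ _ _ [N NP]; exists N.
pose N := \big[setU/set0]_(i <- enum 'I_n) Nf i.
have [mN PN] : measurable N /\ P N = 0.
  by apply: null_bigsetU => i; case: (NfP i).
exists A, N; split => // i; case: (NfP i) => _ _; apply: tail_offS => w Nw.
by rewrite /N (bigD1_seq i) ?mem_enum ?enum_uniq //=; left.
Qed.

Context {n : nat} {X : 'I_n -> T -> R} {A N : set T} {a : R}.
Hypotheses (mX : forall i, measurable_fun setT (X i)) (a01 : (0 < a < 1)%R)
  (mA : measurable A) (PA : P A = a%:E) (mN : measurable N) (PN : P N = 0)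
  (tlX : forall i, tail_off N (X i) A).

Lemma VaR_sum_tail_le : VaR P a (sumRV X) <= \sum_(i < n) VaR P a (X i).
Proof.
pose q i := fine (VaR P a (X i)).
have -> : \sum_(i < n) VaR P a (X i) = (\sum_(i < n) q i)%:E.
  by rewrite -sumEFin; apply: eq_bigr => i _; rewrite fineK // VaR_fin_num.
pose M := \big[setU/set0]_(i <- enum 'I_n) (~` A `&` [set w | (q i < X i w)%R]).
have [mM PM] : measurable M /\ P M = 0.
  apply: null_bigsetU => i; split.
    by apply: measurableI; [exact: measurableC|exact: measurable_superlevel].
  exact: (tail_superlevel_null P (mX i) mA PA mN PN (tlX i) _ (VaR_sublevel P (mX i) _ a01)).
apply: VaR_le; apply: (sublevel_ge_off P (measurable_sumRV mX) mA PA mM PM) => w Aw Mw.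
apply: ler_sum => i _; rewrite leNgt; apply/negP => qX; apply: Mw.
by rewrite /M (bigD1_seq i) ?mem_enum ?enum_uniq //=; left.
Qed.

Lemma sum_VaR_tail_le b : (0 < b < a)%R ->
  \sum_(i < n) VaR P a (X i) <= VaR P b (sumRV X).
Proof.
move=> b0a; apply: (le_VaR_off P (measurable_sumRV mX) mA PA mN PN) => // w Aw Nw.
rewrite /sumRV -sumEFin; apply: lee_sum => i _.
exact: (VaR_le_tail P (mX i) mA PA mN PN (tlX i)).
Qed.

End sum_of_tails.

Section ereal_rays.
Context {R : realType}.
Local Open Scope ereal_scope.

Lemma measure_unique_ereal_rays {m1 m2 : measure (\bar R) R} :
  m1 setT = m2 setT -> m1 setT < +oo ->
  (forall r : R, m1 `]r%:E, +oo[%classic = m2 `]r%:E, +oo[%classic) ->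
  forall B, measurable B -> m1 B = m2 B.
Proof.
move=> m12T m1T m12 B mB.
pose G := [set S : set (\bar R) | (exists r : R, S = `]r%:E, +oo[%classic) \/ S = setT].
apply: (measure_unique G (fun=> setT)) => //.
- have -> : @measurable _ (\bar R) = (ErealGenOInfty.G (R:=R)).-sigma.-measurable.
    exact: ErealGenOInfty.measurableE.
  apply/seteqP; split.
    apply: smallest_sub; first exact: smallest_sigma_algebra.
    by move=> S GS; apply: sub_sigma_algebra; left.
  apply: smallest_sub; first exact: smallest_sigma_algebra.
  by move=> S [GS|->]; [exact: sub_sigma_algebra|exact: measurableT].
- move=> S S' [[r ->]|->] [[r' ->]|->]; rewrite ?setIT ?setTI;
    try by [left; exists r|left; exists r'|right].
  left; exists (Num.max r r'); apply/seteqP; split => x /=; rewrite !in_itv /= !andbT.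
    by move=> [rx r'x]; rewrite EFin_max gt_max rx r'x.
  by rewrite EFin_max gt_max => /andP[rx r'x].
- by move=> _; right.
- by rewrite bigcup_const.
- by move=> S [[r ->]|->].
Qed.

End ereal_rays.

Section expected_shortfall_tail.
Context {d : measure_display} {T : measurableType d} {R : realType}.
Variable P : probability T R.
Context {Y : T -> R} {A N : set T} {a : R}.
Hypotheses (mY : measurable_fun setT Y) (a01 : 0 < a < 1) (mA : measurable A)
  (PA : P A = a%:E) (mN : measurable N) (PN : P N = 0%E) (tlY : tail_off N Y A).
Local Open Scope ereal_scope.

Let D : set R := `]0%R, a[%classic.
Let p r := pr P [set w | (r < Y w)%R].
Let m r := Num.min a (p r).

Let D01 c : D c -> (0 < c < 1)%R.
Proof.
rewrite /D /= in_itv /= => /andP[c0 ca]; rewrite c0 /=.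
by apply: (lt_trans ca); case/andP: a01.
Qed.

Let lt_VaR_D r c : D c -> (r%:E < VaR P c Y) <-> (c < p r)%R.
Proof.
move=> /D01 c01; rewrite (lt_VaR P mY r _ c01) (prE P (measurable_sublevel mY r)).
rewrite lte_fin /p superlevelC prC; last exact: measurable_sublevel.
by split => h; lra.
Qed.

(* The quantile function on [D] and [Y] on [A], sent to [+oo] elsewhere so as to
   be measurable everywhere. Their laws agree on the finite values [B0], since both
   give mass [m r] to every ray [(r, +oo)]. *)
Let phi (c : R) : \bar R := if c \in D then VaR P c Y else +oo.
Let psi (w : T) : \bar R := if w \in A then (Y w)%:E else +oo.
Let B0 : set (\bar R) := range EFin.

Let mB0 : measurable B0.
Proof. exact: measurable_image_EFin measurableT. Qed.

Let phi_gt r : phi @^-1` `]r%:E, +oo[%classic = `]0%R, m r[%classic `|` ~` D.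
Proof.
apply/seteqP; split => c /=; rewrite /phi; case: ifPn => cD.
- rewrite in_itv /= andbT => /(lt_VaR_D _ _ (set_mem cD)) cp; left.
  move: (set_mem cD); rewrite /D /= !in_itv /= => /andP[c0 ca].
  by rewrite c0 /m lt_min ca cp.
- by move=> _; right => /mem_set; rewrite (negbTE cD).
- move=> [|]; last by move=> /(_ (set_mem cD)).
  rewrite /= !in_itv /= andbT /m lt_min => /andP[_ /andP[_ cp]].
  exact/(lt_VaR_D _ _ (set_mem cD)).
- by move=> _; rewrite in_itv /= andbT ltry.
Qed.

Let phi_B0 : phi @^-1` B0 = D.
Proof.
apply/seteqP; split => c /=; rewrite /phi; case: ifPn => cD.
- by move=> _; exact: set_mem.
- by case.
- move=> _; exists (fine (VaR P c Y)) => //.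
  by rewrite fineK // VaR_fin_num // D01 //; exact: set_mem.
- by move=> Dc; move: cD; rewrite (mem_set Dc).
Qed.

Let mphi : measurable_fun setT phi.
Proof.
apply: (measurability _ (ErealGenOInfty.measurableE R)) => /= _ [_ [r ->] <-].
rewrite setTI phi_gt; apply: measurableU; first exact: measurable_itv.
by apply: measurableC; exact: measurable_itv.
Qed.

Let psi_gt r : psi @^-1` `]r%:E, +oo[%classic = (A `&` [set w | (r < Y w)%R]) `|` ~` A.
Proof.
apply/seteqP; split => w /=; rewrite /psi; case: ifPn => wA.
- by rewrite in_itv /= andbT lte_fin => h; left; split => //; exact: set_mem.
- by move=> _; right => /mem_set; rewrite (negbTE wA).
- by move=> [[_ h]|/(_ (set_mem wA))//]; rewrite in_itv /= andbT lte_fin.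
- by move=> _; rewrite in_itv /= andbT ltry.
Qed.

Let psi_B0 : psi @^-1` B0 = A.
Proof.
apply/seteqP; split => w /=; rewrite /psi; case: ifPn => wA.
- by move=> _; exact: set_mem.
- by case.
- by move=> _; exists (Y w).
- by move=> Aw; move: wA; rewrite (mem_set Aw).
Qed.

Let mpsi : measurable_fun setT psi.
Proof.
apply: (measurability _ (ErealGenOInfty.measurableE R)) => /= _ [_ [r ->] <-].
rewrite setTI psi_gt; apply: measurableU; last exact: measurableC.
by apply: measurableI => //; exact: measurable_superlevel.
Qed.

Let mu_phi : measure (\bar R) R.
Proof. by refine (pushforward lebesgue_measure phi); exact: mphi. Defined.
Let mu_psi : measure (\bar R) R.
Proof. by refine (pushforward P psi); exact: mpsi. Defined.

Let mu_phi_psi B : measurable B -> B `<=` B0 -> mu_phi B = mu_psi B.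
Proof.
move=> mB BB0; rewrite -(setIidl BB0).
pose nu_phi := mrestr mu_phi mB0; pose nu_psi := mrestr mu_psi mB0.
have lebD : lebesgue_measure D = a%:E.
  rewrite /D lebesgue_measure_itv /= lte_fin; case/andP: a01 => a0 _.
  by rewrite a0 -EFinB subr0.
have nuT : nu_phi setT = nu_psi setT.
  change (lebesgue_measure (phi @^-1` (setT `&` B0)) = P (psi @^-1` (setT `&` B0))).
  by rewrite !setTI phi_B0 psi_B0 PA lebD.
have nu_phiT : nu_phi setT < +oo.
  change (lebesgue_measure (phi @^-1` (setT `&` B0)) < +oo).
  by rewrite setTI phi_B0 lebD; exact: ltry.
suff nu_rays r : nu_phi `]r%:E, +oo[%classic = nu_psi `]r%:E, +oo[%classic.
  by have := measure_unique_ereal_rays nuT nu_phiT nu_rays _ mB.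
change (lebesgue_measure (phi @^-1` (`]r%:E, +oo[%classic `&` B0)) =
  P (psi @^-1` (`]r%:E, +oo[%classic `&` B0))).
rewrite !preimage_setI phi_gt phi_B0 psi_gt psi_B0 !setIUl !setICl !setU0.
rewrite [X in P X]setIidl; last by move=> w [].
rewrite (tail_superlevel P mY mA PA mN PN tlY) setIidl; last first.
  move=> c; rewrite /D /= !in_itv /= /m lt_min => /andP[c0 /andP[ca _]].
  by rewrite c0 ca.
have m0 : (0 <= m r)%R by rewrite /m le_min pr_ge0 andbT; case/andP: a01 => /ltW.
rewrite lebesgue_measure_itv /= lte_fin; case: ltP => h; first by rewrite oppr0 adde0.
by congr EFin; apply/esym/le_anti; rewrite m0 h.
Qed.

Lemma integral_VaR_tail : P.-integrable setT (EFin \o Y) ->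
  \int[lebesgue_measure]_(c in D) VaR P c Y = \int[P]_(w in A) (Y w)%:E.
Proof.
move=> intY.
have ipsi : P.-integrable A psi.
  apply: (eq_integrable mA (EFin \o Y)); first by move=> w wA; rewrite /psi wA.
  exact: integrableS measurableT mA (@subsetT _ A) intY.
have same_integral f : \int[pushforward lebesgue_measure phi]_(y in B0) f y =
    \int[pushforward P psi]_(y in B0) f y.
  by apply: eq_measure_integral => S mS SB0; exact: mu_phi_psi.
have int_abs : \int[lebesgue_measure]_(c in D) `|phi c| = \int[P]_(w in A) `|psi w|.
  have mabs : measurable_fun B0 (@abse R) by exact: abse_measurable.
  have := @ge0_integral_pushforward _ _ (measurableTypeR R) _ _ phi mphi lebesgue_measure
    B0 abse mB0 mabs (fun y _ => abse_ge0 y).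
  rewrite phi_B0 => <-.
  have := @ge0_integral_pushforward _ _ _ _ _ psi mpsi P
    B0 abse mB0 mabs (fun y _ => abse_ge0 y).
  rewrite psi_B0 => <-.
  exact: same_integral.
have iphi : lebesgue_measure.-integrable D phi.
  apply/integrableP; split.
    exact: measurable_funS measurableT (@subsetT _ D) mphi.
  by rewrite int_abs; case/integrableP: ipsi.
transitivity (\int[lebesgue_measure]_(c in D) phi c).
  by apply: eq_integral => c cD; rewrite /phi cD.
transitivity (\int[P]_(w in A) psi w); last first.
  by apply: eq_integral => w wA; rewrite /psi wA.
have := @integral_pushforward _ _ (measurableTypeR R) _ _ phi mphi lebesgue_measure
  B0 id (@measurable_id _ _ setT).
rewrite phi_B0 => /(_ iphi mB0) <-.
have := @integral_pushforward _ _ _ _ _ psi mpsi P B0 id (@measurable_id _ _ setT).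
rewrite psi_B0 => /(_ ipsi mB0) <-.
exact: same_integral.
Qed.

End expected_shortfall_tail.

Lemma ge_left_continuous {R : realType} {f : R -> \bar R} {a : R} {s : \bar R} :
  0 < a -> {for a, continuous f} -> (forall b, 0 < b < a -> (s <= f b)%E) ->
  (s <= f a)%E.
Proof.
move=> a0 fa sf.
apply: (closed_cvg [set z | s <= z]%E) (@closed_ereal_le_ereal _ s) _ _
  (cvg_at_left_filter fa).
near=> b; apply: sf; apply/andP; split; near: b; [exact: nbhs_left_gt|exact: nbhs_left_lt].
Unshelve. all: by end_near.
Qed.

Section risk_of_concentrated_sum.
Context {d : measure_display} {T : measurableType d} {R : realType}.
Variable P : probability T R.
Context {n : nat} {X : 'I_n -> T -> R} {A N : set T} {a : R}.
Hypotheses (mX : forall i, measurable_fun setT (X i)) (a01 : 0 < a < 1)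
  (mA : measurable A) (PA : P A = a%:E) (mN : measurable N) (PN : P N = 0%E)
  (tlX : forall i, tail_off N (X i) A).
Local Open Scope ereal_scope.

Lemma ES_sum_tail : (forall i, P.-integrable setT (EFin \o X i)) ->
  ES P a (sumRV X) = \sum_(i < n) ES P a (X i).
Proof.
move=> intX.
have intS : P.-integrable setT (EFin \o sumRV X).
  apply: (eq_integrable measurableT (fun w => \sum_(i < n) (X i w)%:E)).
    by move=> w _; rewrite /sumRV /= sumEFin.
  by apply: integrable_sum => // i _; exact: intX.
have intXA i : P.-integrable A (EFin \o X i).
  exact: integrableS measurableT mA (@subsetT _ A) (intX i).
have a0 : a != 0%R by case/andP: a01 => a0 _; rewrite gt_eqF.
rewrite /ES (negbTE a0).
rewrite (integral_VaR_tail P (measurable_sumRV mX) a01 mA PA mN PN (tail_off_sum tlX) intS).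
under eq_bigr do rewrite (integral_VaR_tail P (mX _) a01 mA PA mN PN (tlX _) (intX _)).
have -> : \int[P]_(w in A) (sumRV X w)%:E = \sum_(i < n) \int[P]_(w in A) (X i w)%:E.
  by rewrite -integral_sum //; apply: eq_integral => w _; rewrite /sumRV sumEFin.
have fin i : \int[P]_(w in A) (X i w)%:E \is a fin_num.
  exact: integrable_fin_num (intXA i).
rewrite -(eq_bigr _ (fun i _ => fineK (fin i))) sumEFin -EFinM mulr_sumr -sumEFin.
by apply: eq_bigr => i _; rewrite EFinM fineK.
Qed.

Lemma rho_sum_tail_le r : admissible P r X ->
  rho P r a (sumRV X) <= \sum_(i < n) rho P r a (X i).
Proof.
case: r => /= adm; first exact: (VaR_sum_tail_le P mX a01 mA PA mN PN tlX).
by rewrite ES_sum_tail // => i; case: (adm i).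
Qed.

Lemma rho_sum_tail_ge r : admissible P r X ->
  {for a, continuous (fun b => rho P r b (sumRV X))} ->
  \sum_(i < n) rho P r a (X i) <= rho P r a (sumRV X).
Proof.
case: r => /= adm aS.
  apply: (ge_left_continuous _ aS); first by case/andP: a01.
  by move=> b ba; exact: (sum_VaR_tail_le P mX mA PA mN PN tlX).
by rewrite ES_sum_tail // => i; case: (adm i).
Qed.

End risk_of_concentrated_sum.

Section diversification_quotient.
Context {d : measure_display} {T : measurableType d} {R : realType}.
Variables (P : probability T R) (r : risk_measure) (n : nat) (X : 'I_n -> T -> R).
Variable a : R.
Hypothesis a01 : 0 < a < 1.
Local Open Scope ereal_scope.

Let E := [set b : R | (0 < b < 1)%R /\
  rho P r b (sumRV X) <= \sum_(i < n) rho P r a (X i)].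

Let alpha_starE : E a -> alpha_star P r a X = inf E.
Proof. by move=> Ea; rewrite /alpha_star; case: pselect => // -[]; exists a. Qed.

Let inf_le : E a -> (inf E <= a)%R.
Proof.
apply: ge_inf; exists 0%R => b [/andP[b0 _] _]; exact: ltW.
Qed.

Lemma DQ_le1 : rho P r a (sumRV X) <= \sum_(i < n) rho P r a (X i) -> (DQ P r a X <= 1)%R.
Proof.
move=> Ea; have a0 : (0 < a)%R by case/andP: a01.
by rewrite /DQ alpha_starE // ler_pdivrMr // mul1r inf_le.
Qed.

Lemma DQ_eq1 : rho P r a (sumRV X) = \sum_(i < n) rho P r a (X i) ->
  (forall b, (0 < b < a)%R -> rho P r a (sumRV X) < rho P r b (sumRV X)) ->
  DQ P r a X = 1%R.
Proof.
move=> eqa gta; have a0 : (0 < a)%R by case/andP: a01.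
have Ea : E a by split; rewrite ?eqa.
rewrite /DQ; suff -> : alpha_star P r a X = a by rewrite divff // gt_eqF.
rewrite alpha_starE //; apply/le_anti; rewrite inf_le //=.
apply: lb_le_inf; first by exists a.
move=> b [/andP[b0 b1] bE]; rewrite leNgt; apply/negP => ba.
by have := gta b (introT andP (conj b0 ba)); rewrite eqa ltNge bE.
Qed.

End diversification_quotient.

Theorem theorem1 (d : measure_display) (T : measurableType d) (R : realType)
  (P : probability T R) (n : nat) (a : R) (r : risk_measure)
  (X : 'I_n -> T -> R) :
  atomless P -> (2 <= n)%N -> 0 < a < 1 ->
  admissible P r X ->
  concentrated P a X ->
  DQ P r a X <= 1 /\
  ({for a, continuous (fun b => rho P r b (sumRV X))} ->
   (forall b, 0 < b < a -> (rho P r a (sumRV X) < rho P r b (sumRV X))%E) ->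
   DQ P r a X = 1).
Proof.
move=> _ n2 a01 adm conc.
have [A [N [mA PA mN PN tlX]]] := concentrated_tail_off P (ltnW n2) conc.
have mX i : measurable_fun setT (X i) by case: r adm => adm; [exact: adm|case: (adm i)].
have le_sum := rho_sum_tail_le P mX a01 mA PA mN PN tlX r adm.
split => [|cont incr]; first exact: DQ_le1.
apply: DQ_eq1 => //; apply/le_anti.
by rewrite le_sum (rho_sum_tail_ge P mX a01 mA PA mN PN tlX r adm cont).
Qed.
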